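(* Let $P$ denote the Petersen graph. For $i=0,\ldots,8$, let $P_i$ be a copy of the graph obtained from $P$ by deleting one edge $[u_i,v_i]$ (so $u_i,v_i$ are the two vertices of degree $2$ in $P_i$), the copies being pairwise vertex-disjoint. Let $G$ be the graph obtained from $P_0\cup\cdots\cup P_8$ by adding the edges $[v_i,u_{i+1}]$ for $i=0,\ldots,8$ (indices modulo $9$). Then $G$ is a bridgeless cubic graph of order $2n=90$ and $\chi'_{[44]}(G)\geq 5$, i.e. the edge set of $G$ cannot be covered by four matchings of size $n-1=44$.
   Context: All graphs are finite and simple. For a positive integer $k$, a $[k]$-matching of $G$ is a matching of $G$ with exactly $k$ edges. The excessive $[k]$-index $\chi'_{[k]}(G)$ is the minimum number of $[k]$-matchings of $G$ whose union is $E(G)$; if some edge of $G$ lies in no $[k]$-matching, one sets $\chi'_{[k]}(G)=\infty$. *)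

From mathcomp Require Import all_boot.
Set Implicit Arguments. Unset Strict Implicit. Unset Printing Implicit Defensive.

Section Graphs.
Variable V : finType.
Variable adj : rel V.

Definition simple_graph : Prop := irreflexive adj /\ symmetric adj.

Definition edge_set : {set {set V}} :=
  [set e : {set V} | [exists x, exists y, adj x y && (e == [set x; y])]].

Definition is_matching (M : {set {set V}}) : bool :=
  (M \subset edge_set) &&
  [forall e1 in M, forall e2 in M, (e1 != e2) ==> [disjoint e1 & e2]].

Definition is_kmatching (k : nat) (M : {set {set V}}) : bool :=
  is_matching M && (#|M| == k).

Definition coverable_by_kmatchings (k m : nat) : Prop :=
  exists Ms : 'I_m -> {set {set V}},
    (forall i, is_kmatching k (Ms i)) /\ \bigcup_(i < m) Ms i = edge_set.

(* chi'_[k](G) >= c : every cover of E(G) by [k]-matchings uses >= c of them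
   (vacuous when chi'_[k] = infinity) *)
Definition excessive_index_ge (k c : nat) : Prop :=
  forall m, coverable_by_kmatchings k m -> c <= m.

Definition cubic : Prop := forall x : V, #|[set y | adj x y]| = 3.

Definition adj_minus (a b : V) : rel V :=
  fun x y => adj x y && ~~ (((x == a) && (y == b)) || ((x == b) && (y == a))).

Definition bridgeless : Prop :=
  forall x y : V, adj x y -> connect (adj_minus x y) x y.
End Graphs.

(* ---------- The Petersen graph on 'I_10 ----------
   outer 5-cycle 0-1-2-3-4-0, spokes i -- i+5, inner pentagram 5+i -- 5+((i+2) mod 5) *)
Definition petersen_adj_nat (a b : nat) : bool :=
  [|| [&& a < 5, b < 5 & (b == (a + 1) %% 5) || (a == (b + 1) %% 5)],
      (a < 5) && (b == a + 5),
      (b < 5) && (a == b + 5) |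
      [&& 5 <= a, a < 10, 5 <= b, b < 10 &
         (b - 5 == (a - 5 + 2) %% 5) || (a - 5 == (b - 5 + 2) %% 5)]].

Definition petersen_adj : rel 'I_10 := fun a b => petersen_adj_nat a b.

(* P minus the edge [u,v] with u = 0, v = 1 (Petersen is edge-transitive) *)
Definition u0 : 'I_10 := inord 0.
Definition v0 : 'I_10 := inord 1.
Definition petersen_minus_adj : rel 'I_10 := adj_minus petersen_adj u0 v0.

(* ---------- The graph G ----------
   vertex (i, p) = vertex p of copy P_i; u_i = (i,0), v_i = (i,1);
   extra edges [v_i, u_{i+1}], indices mod 9 *)
Definition GV : finType := ('I_9 * 'I_10)%type.

Definition G_adj : rel GV := fun x y =>
  [|| (x.1 == y.1) && petersen_minus_adj x.2 y.2,
      [&& x.2 == v0, y.2 == u0 & (y.1 : nat) == (x.1 + 1) %% 9] |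
      [&& y.2 == v0, x.2 == u0 & (x.1 : nat) == (y.1 + 1) %% 9]].

(* For the excessive index: a matching with k edges covers 2k vertices, so a
   [44]-matching of G misses exactly two vertices and so leaves uncovered
   vertices in at most two copies.  Given at most four [44]-matchings, some
   copy P_i is covered by all of them.  On the sixteen edges of G meeting P_i
   each of them then traces a local perfect matching (every vertex of P_i on
   exactly one chosen edge).  Enumerating the 2^16 candidate traces shows that
   there are six local perfect matchings and that no four of them contain all
   sixteen edges, so some edge of G lies in none of the matchings. *)

From mathcomp Require Import all_boot.
Set Implicit Arguments. Unset Strict Implicit. Unset Printing Implicit Defensive.

Section Matchings.
Variables (V : finType) (adj : rel V).
Hypothesis adj_irr : irreflexive adj.
Implicit Types (M : {set {set V}}) (e : {set V}).

Lemma edge_setP e :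
  reflect (exists x y, adj x y /\ e = [set x; y]) (e \in edge_set adj).
Proof.
rewrite inE; apply: (iffP existsP) => [[x /existsP[y /andP[xy /eqP ->]]] | [x [y [xy ->]]]].
  by exists x, y.
by exists x; apply/existsP; exists y; rewrite xy eqxx.
Qed.

Lemma card_edge e : e \in edge_set adj -> #|e| = 2.
Proof.
case/edge_setP=> x [y [xy ->]]; rewrite cards2.
by case: eqP xy => [->|//]; rewrite adj_irr.
Qed.

Lemma matching_trivIset M : is_matching adj M -> trivIset M.
Proof.
case/andP=> _ /forall_inP dis; apply/trivIsetP => e1 e2 e1M e2M.
by move: (dis e1 e1M) => /forall_inP /(_ e2 e2M) /implyP.
Qed.

Lemma matching_edge_eq M e1 e2 x : is_matching adj M ->
  e1 \in M -> e2 \in M -> x \in e1 -> x \in e2 -> e1 = e2.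
Proof.
move=> /matching_trivIset /trivIsetP dis e1M e2M xe1 xe2.
apply/eqP; apply: contraT => /(dis _ _ e1M e2M) /disjointFr /(_ xe1).
by rewrite xe2.
Qed.

Lemma card_cover_matching M : is_matching adj M -> #|cover M| = 2 * #|M|.
Proof.
move=> Mmatch; have /andP[Msub _] := Mmatch.
rewrite -(eqP (matching_trivIset Mmatch)) mulnC -sum_nat_const.
by apply: eq_bigr => e eM; apply: card_edge (subsetP Msub e eM).
Qed.

Lemma card_uncovered k M : is_kmatching adj k M -> #|~: cover M| = #|V| - 2 * k.
Proof.
case/andP=> Mmatch /eqP cardM.
by rewrite cardsCs setCK card_cover_matching // cardM.
Qed.
End Matchings.

Lemma card_bigcup_leq (I T : finType) (A : I -> {set T}) :
  #|\bigcup_i A i| <= \sum_i #|A i|.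
Proof.
elim/big_ind2: _ => [|B1 n1 B2 n2 le1 le2|i _] //; first by rewrite cards0.
by rewrite cardsU (leq_trans (leq_subr _ _)) ?leq_add.
Qed.

(* Ordinals built by reduction modulo n + 1, which evaluate to closed values
   (unlike [inord]); [ords n] lists all of 'I_n.+1. *)
Definition ord_mod (n k : nat) : 'I_n.+1 := Ordinal (ltn_pmod k (ltn0Sn n)).
Definition ords (n : nat) : seq 'I_n.+1 := [seq ord_mod n k | k <- iota 0 n.+1].

Lemma mem_ords n (i : 'I_n.+1) : i \in ords n.
Proof.
apply/mapP; exists (val i); first by rewrite mem_iota ltn_ord.
by apply: val_inj; rewrite /= modn_small.
Qed.

(* The vertices of G, listed as plain pairs: [vertex] is the carrier of [GV]
   without its finite-type structure, so that the certificates below, which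
   are decided by evaluation, only manipulate pairs of ordinals. *)
Definition vertex : Type := ('I_9 * 'I_10)%type.
Definition vertices : seq vertex := [seq (i, p) | i <- ords 8, p <- ords 9].

Lemma mem_vertices (x : GV) : x \in vertices.
Proof. by case: x => i p; apply/allpairsP; exists (i, p); rewrite !mem_ords. Qed.

Lemma vertices_uniq : uniq vertices.
Proof. by vm_compute. Qed.

Definition eqv (x y : vertex) : bool := (x.1 == y.1 :> nat) && (x.2 == y.2 :> nat).

Lemma eqvE (x y : GV) : eqv x y = (x == y).
Proof. by case: x y => [i p] [j q]; rewrite /eqv xpair_eqE. Qed.

Definition petersen_minus_nat (a b : nat) : bool :=
  petersen_adj_nat a b && ~~ (((a == 0) && (b == 1)) || ((a == 1) && (b == 0))).

Definition adjn : rel vertex := fun x y =>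
  [|| (x.1 == y.1 :> nat) && petersen_minus_nat x.2 y.2,
      [&& x.2 == 1 :> nat, y.2 == 0 :> nat & y.1 == (x.1 + 1) %% 9 :> nat] |
      [&& y.2 == 1 :> nat, x.2 == 0 :> nat & x.1 == (y.1 + 1) %% 9 :> nat]].

Lemma adjnE (x y : GV) : G_adj x y = adjn x y.
Proof.
have u0E : u0 = 0 :> nat by rewrite /u0 inordK.
have v0E : v0 = 1 :> nat by rewrite /v0 inordK.
have ord_eqE n (a b : 'I_n) : (a == b) = (a == b :> nat) by [].
by rewrite /G_adj /petersen_minus_adj /adj_minus /petersen_adj !ord_eqE u0E v0E.
Qed.

Lemma adj_certificate :
  all (fun x => ~~ adjn x x && (count (adjn x) vertices == 3) &&
                all (fun y => adjn x y == adjn y x) vertices) vertices.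
Proof. by vm_compute. Qed.

Lemma G_simple : simple_graph G_adj.
Proof.
have cert x := allP adj_certificate x (mem_vertices x).
split=> [x | x y]; rewrite !adjnE.
  by case/andP: (cert x) => /andP[/negbTE].
by case/andP: (cert x) => _ /allP /(_ y (mem_vertices y)) /eqP.
Qed.

Lemma G_cubic : cubic G_adj.
Proof.
move=> x; have /andP[/andP[_ /eqP <-] _] := allP adj_certificate x (mem_vertices x).
rewrite -size_filter -(card_uniqP (filter_uniq _ vertices_uniq)).
by apply: eq_card => y; rewrite inE mem_filter mem_vertices andbT adjnE.
Qed.

Lemma card_GV : #|GV| = 90.
Proof. by rewrite card_prod !card_ord. Qed.

(* A depth-first path search; its output is not trusted but checked below, so
   no correctness proof is needed.  It returns a path from x to y (without x)
   if one is found, together with the updated list of visited vertices. *)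
Section PathSearch.
Variables (T : Type) (eqb : T -> T -> bool) (next : T -> seq T).

Fixpoint find_path (fuel : nat) (visited : seq T) (x y : T) : option (seq T) * seq T :=
  if eqb x y then (Some [::], visited) else
  if fuel is fuel'.+1 then
    let fix explore (zs visited : seq T) :=
      if zs is z :: zs' then
        if has (eqb z) visited then explore zs' visited else
        match find_path fuel' (z :: visited) z y with
        | (Some p, visited') => (Some (z :: p), visited')
        | (None, visited') => explore zs' visited'
        end
      else (None, visited) in
    explore (next x) (x :: visited)
  else (None, visited).
End PathSearch.

Definition adjn_minus (x y : vertex) : rel vertex := fun a b =>
  adjn a b && ~~ ((eqv a x && eqv b y) || (eqv a y && eqv b x)).

Definition bridge_free (x y : vertex) : bool :=
  let next z := [seq w <- vertices | adjn_minus x y z w] in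
  if (find_path eqv next 90 [::] x y).1 is Some p
  then path (adjn_minus x y) x p && eqv (last x p) y
  else false.

Lemma bridge_certificate :
  all (fun x => all (bridge_free x) [seq y <- vertices | adjn x y]) vertices.
Proof. by vm_compute. Qed.

Lemma G_bridgeless : bridgeless G_adj.
Proof.
move=> x y; rewrite adjnE => xy.
have := allP (allP bridge_certificate x (mem_vertices x)) y.
rewrite mem_filter xy mem_vertices => /(_ isT).
rewrite /bridge_free; case: (find_path _ _ _ _ _ _).1 => [p|] //.
case/andP=> xp; rewrite eqvE => /eqP ylast.
apply/connectP; exists p; last by rewrite ylast.
rewrite -(eq_path (e := adjn_minus x y)) // => a b.
by rewrite /adjn_minus /adj_minus adjnE !eqvE.
Qed.

(* The sixteen edges of G meeting a copy P_i.  A triple (a, b, d) stands for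
   the edge joining vertex a of copy i to vertex b of copy i + d (mod 9): the
   first fourteen are the edges of P - [u, v], the last two are the edges
   [u_i, v_(i-1)] and [v_i, u_(i+1)] leaving the copy. *)
Definition local_edges : seq (nat * nat * nat) :=
  [:: (1,2,0); (2,3,0); (3,4,0); (4,0,0); (0,5,0); (1,6,0); (2,7,0); (3,8,0);
      (4,9,0); (5,7,0); (6,8,0); (7,9,0); (8,5,0); (9,6,0); (0,1,8); (1,0,1)].

Definition end1 (i : 'I_9) (t : nat * nat * nat) : vertex := (i, ord_mod 9 t.1.1).
Definition end2 (i : 'I_9) (t : nat * nat * nat) : vertex :=
  (ord_mod 8 (i + t.2), ord_mod 9 t.1.2).
Definition local_edge (i : 'I_9) (t : nat * nat * nat) : {set GV} :=
  [set end1 i t; end2 i t].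

Definition incident (p : nat) (t : nat * nat * nat) : bool :=
  (p == t.1.1) || ((t.2 == 0) && (p == t.1.2)).
Definition incidence (t : nat * nat * nat) : seq bool :=
  [seq incident p t | p : 'I_10 <- ords 9].

Lemma local_edge_certificate :
  all (fun i => all (fun t => adjn (end1 i t) (end2 i t) &&
          all (fun p => (eqv (i, p) (end1 i t) || eqv (i, p) (end2 i t)) == incident p t)
              (ords 9))
        local_edges) (ords 8).
Proof. by vm_compute. Qed.

Lemma local_edge_exhaustive :
  all (fun x => all (fun y => has (fun t =>
          (eqv x (end1 x.1 t) && eqv y (end2 x.1 t)) ||
          (eqv x (end2 x.1 t) && eqv y (end1 x.1 t))) local_edges)
        [seq y <- vertices | adjn x y]) vertices.
Proof. by vm_compute. Qed.

Lemma incidence_certificate :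
  uniq local_edges &&
  all (fun t => all (fun t' => (incidence t == incidence t') ==> (t == t')) local_edges)
      local_edges.
Proof. by vm_compute. Qed.

Lemma local_edges_uniq : uniq local_edges.
Proof. by case/andP: incidence_certificate. Qed.

Lemma local_edge_in_G i t : t \in local_edges -> local_edge i t \in edge_set G_adj.
Proof.
move=> tL; apply/edge_setP; exists (end1 i t), (end2 i t); split=> //.
by rewrite adjnE; case/andP: (allP (allP local_edge_certificate i (mem_ords i)) t tL).
Qed.

Lemma mem_local_edge i t (p : 'I_10) :
  t \in local_edges -> ((i, p) \in local_edge i t) = incident p t.
Proof.
move=> tL; case/andP: (allP (allP local_edge_certificate i (mem_ords i)) t tL) => _.
by move/allP/(_ p (mem_ords p))/eqP <-; rewrite !eqvE !inE.
Qed.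

Lemma local_edge_inj i : {in local_edges &, injective (local_edge i)}.
Proof.
move=> t t' tL t'L E; case/andP: incidence_certificate => _ /allP/(_ t tL)/allP/(_ t' t'L).
suff -> : incidence t == incidence t' by move/eqP.
by apply/eqP/eq_in_map => p _; rewrite -(mem_local_edge i) // -(mem_local_edge i) // E.
Qed.

Lemma edge_at_copy i p y : G_adj (i, p) y ->
  exists2 t, t \in local_edges & [set (i, p); y] = local_edge i t.
Proof.
rewrite adjnE => ipy; have := allP local_edge_exhaustive (i, p) (mem_vertices _).
move/allP/(_ y); rewrite mem_filter ipy mem_vertices => /(_ isT) /hasP[t tL].
rewrite !eqvE => /orP[] /andP[/eqP E1 /eqP E2]; exists t => //.
  by rewrite /local_edge -E1 -E2.
by rewrite /local_edge -E1 -E2 setUC.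
Qed.

Definition trace (M : {set {set GV}}) (i : 'I_9) : seq bool :=
  [seq local_edge i t \in M | t <- local_edges].

Definition local_perfect (s : seq bool) : bool :=
  all (fun p : 'I_10 => count (fun tb => tb.2 && incident p tb.1) (zip local_edges s) == 1)
      (ords 9).

Lemma trace_local_perfect M i : is_matching G_adj M ->
  (forall p, (i, p) \in cover M) -> local_perfect (trace M i).
Proof.
move=> Mmatch covered; have /andP[Msub _] := Mmatch.
apply/allP => p _; rewrite -{1}(map_id local_edges) zip_map count_map.
have /bigcupP[e eM ipe] := covered p.
have [t0 t0L e_t0] : exists2 t0, t0 \in local_edges & e = local_edge i t0.
  case/edge_setP: (subsetP Msub e eM) => x [y [xy exy]].
  move: ipe; rewrite exy !inE => /orP[] /eqP ip.
    by rewrite -ip; apply: edge_at_copy; rewrite ip.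
  by rewrite -ip setUC; apply: edge_at_copy; rewrite ip (proj2 G_simple).
rewrite (@eq_in_count _ _ (pred1 t0)) ?count_uniq_mem ?local_edges_uniq ?t0L //.
move=> t tL /=; rewrite -(mem_local_edge i) //; apply/andP/eqP => [[tM ipt] | ->].
  apply: (@local_edge_inj i) => //.
  by rewrite -e_t0 (matching_edge_eq Mmatch tM eM ipt ipe).
by rewrite -e_t0.
Qed.

Fixpoint bitstrings (n : nat) : seq (seq bool) :=
  if n is n'.+1 then [seq b :: s | b <- [:: true; false], s <- bitstrings n']
  else [:: [::]].

Lemma mem_bitstrings n s : size s = n -> s \in bitstrings n.
Proof.
elim: n s => [|n IHn] [|b s] //= [/IHn sn].
by rewrite !mem_cat; case: b; rewrite map_f ?orbT.
Qed.

(* The traces that are local perfect matchings (there are six of them). *)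
Definition local_pms : seq (seq bool) := [seq s <- bitstrings 16 | local_perfect s].

Lemma trace_local_pm M i : is_matching G_adj M ->
  (forall p, (i, p) \in cover M) -> trace M i \in local_pms.
Proof.
move=> Mmatch covered; rewrite mem_filter trace_local_perfect //.
by rewrite mem_bitstrings // size_map.
Qed.

(* [no_small_cover pms]: no sub-list of at most four traces of the duplicate-
   free list [pms] covers all sixteen positions; it is checked by running
   through the sub-lists of [pms] as masks. *)
Section SmallCovers.
Variable pms : seq (seq bool).

Definition no_small_cover : bool :=
  uniq pms &&
  all (fun msk => (size (mask msk pms) <= 4) ==>
         has (fun k => ~~ has (nth false ^~ k) (mask msk pms)) (iota 0 16))
      (bitstrings (size pms)).

Lemma few_traces_miss_a_position (S : seq (seq bool)) : no_small_cover ->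
  {subset S <= pms} -> size S <= 4 ->
  exists2 k, k < 16 & forall s, s \in S -> ~~ nth false s k.
Proof.
case/andP=> pms_uniq /allP cert SL sizeS.
pose msk := [seq s \in S | s <- pms].
have := cert msk (mem_bitstrings (size_map _ _)); rewrite -filter_mask.
have -> : size [seq s <- pms | s \in S] <= 4.
  apply: leq_trans sizeS; apply: uniq_leq_size; first exact: filter_uniq.
  by move=> s; rewrite mem_filter => /andP[].
case/hasP=> k; rewrite mem_iota => /andP[_ k16] /hasPn miss; exists k => // s sS.
by apply: miss; rewrite mem_filter sS SL.
Qed.
End SmallCovers.

Lemma local_pms_no_small_cover : no_small_cover local_pms.
Proof. by vm_compute. Qed.

Lemma uncovered_44 M : is_kmatching G_adj 44 M -> #|~: cover M| = 2.
Proof. by move/card_uncovered => ->; rewrite ?card_GV //; case: G_simple. Qed.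

(* Pigeonhole: four [44]-matchings miss at most 8 vertices, so some copy
   among the nine is entirely covered by each of them. *)
Lemma covered_copy m (Ms : 'I_m -> {set {set GV}}) : m <= 4 ->
  (forall j, is_kmatching G_adj 44 (Ms j)) ->
  exists i : 'I_9, forall j p, (i, p) \in cover (Ms j).
Proof.
move=> m4 Mk; pose touched := \bigcup_j fst @: ~: cover (Ms j).
have small : #|touched| < #|[set: 'I_9]|.
  apply: leq_ltn_trans (card_bigcup_leq _) _.
  apply: (@leq_ltn_trans (\sum_(j < m) 2)).
    apply: leq_sum => j _; apply: leq_trans (leq_imset_card _ _) _.
    by rewrite uncovered_44.
  by rewrite sum_nat_const card_ord cardsT card_ord ltnS (leq_mul2r 2 m 4) m4 orbT.
have /subsetPn[i _ iT] : ~~ ([set: 'I_9] \subset touched).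
  by apply: contraTN small => /subset_leq_card; rewrite leqNgt.
exists i => j p; apply: contraR iT => ipU.
by apply/bigcupP; exists j => //; apply/imsetP; exists (i, p); rewrite ?inE.
Qed.

(* The edges of G cannot be covered by at most four [44]-matchings: on a copy
   covered by all of them they would trace at most four local perfect
   matchings covering all sixteen local edges. *)
Lemma excessive_index_44 : excessive_index_ge G_adj 44 5.
Proof.
move=> m [Ms [Mk Mcover]]; rewrite leqNgt; apply/negP => m4.
have [i covered] := covered_copy m4 Mk.
have Mmatch j : is_matching G_adj (Ms j) by case/andP: (Mk j).
pose S := [seq trace (Ms j) i | j <- enum 'I_m].
have [k k16 miss] : exists2 k, k < 16 & forall s, s \in S -> ~~ nth false s k.
  apply: few_traces_miss_a_position local_pms_no_small_cover _ _.
    by move=> _ /mapP[j _ ->]; apply: trace_local_pm.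
  by rewrite size_map size_enum_ord.
pose t := nth (0, 0, 0) local_edges k.
have : local_edge i t \in \bigcup_j Ms j by rewrite Mcover local_edge_in_G ?mem_nth.
case/bigcupP=> j _ tM; have := miss _ (map_f (fun j => trace (Ms j) i) (mem_enum _ j)).
by rewrite (nth_map (0, 0, 0)) // tM.
Qed.

Theorem mainTheorem8 :
  [/\ simple_graph G_adj, cubic G_adj, bridgeless G_adj, #|GV| = 90
    & excessive_index_ge G_adj 44 5].
Proof.
split; [exact: G_simple | exact: G_cubic | exact: G_bridgeless | exact: card_GV |].
exact: excessive_index_44.
Qed.
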